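(* Let $n\ge 2$ and let $X\subset\mathbb{P}^n$ be a hypersurface over $\mathbb{F}_q$ that contains at least one $\mathbb{F}_q$-point at which $X$ is smooth and satisfies $\#X(\mathbb{F}_q)\geq \#\mathbb{P}^n(\mathbb{F}_q)-1$. Then $\deg(X)\geq q+1$. *)

From mathcomp Require Import all_boot all_order all_algebra all_field.
From mathcomp Require Import mpoly.
Set Implicit Arguments. Unset Strict Implicit. Unset Printing Implicit Defensive.
Import GRing.Theory.
Local Open Scope ring_scope.

(* Points of P^n(K) (n+1 homogeneous coordinates x_0..x_n) are represented by
   their unique normalized representative: the first nonzero coordinate is 1. *)
Definition normalized (K : fieldType) (N : nat) (v : {ffun 'I_N -> K}) : bool :=
  [exists i : 'I_N, (v i == 1) && [forall j : 'I_N, (j < i)%N ==> (v j == 0)]].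

Definition proj_points (K : finFieldType) (N : nat) : {set {ffun 'I_N -> K}} :=
  [set v | normalized v].

Definition homog_of_deg (K : fieldType) (N d : nat) (F : {mpoly K[N]}) : bool :=
  F \is ishomog1 d mdeg.

Definition hyp_points (K : finFieldType) (N : nat) (F : {mpoly K[N]})
  : {set {ffun 'I_N -> K}} :=
  [set v in proj_points K N | F.@[v] == 0].

Definition smooth_point (K : finFieldType) (N : nat) (F : {mpoly K[N]})
  (v : {ffun 'I_N -> K}) : bool :=
  (v \in hyp_points F) && [exists i : 'I_N, (mderiv i F).@[v] != 0].

(* Suppose d <= q and let v be a smooth F_q-point of X = V(F).  If the
   directional derivative D_R F(v) is nonzero, the line through v and R is not
   contained in X: otherwise F(R) = 0, so t |-> F(v + tR) is a polynomial of
   degree < d <= q vanishing on all of F_q, yet its linear coefficient is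
   D_R F(v) <> 0.  Hence each such line carries a point off X.  As at most one
   point of P^n lies off X, the lines through v in two directions with nonzero
   derivative meet there, which puts the second direction in the plane spanned
   by v and the first.  But for n >= 2, starting from a coordinate direction
   e_i with dF/dx_i(v) <> 0, one finds a second direction with nonzero
   derivative outside that plane. *)

From mathcomp Require Import all_boot all_order all_algebra all_field.
From mathcomp Require Import mpoly.
From mathcomp Require Import ring zify.
Set Implicit Arguments.
Unset Strict Implicit.
Unset Printing Implicit Defensive.
Import GRing.Theory.
Local Open Scope ring_scope.

Local Notation vec K N := {ffun 'I_N -> K^o}.

Section TopTerm.
Variable R : comNzRingType.
Implicit Types (k l : nat) (g h : {poly R}) (a b c r : R).

(* [g] has degree at most [k] and coefficient [a] at ['X^k]; [a] may be [0]. *)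
Definition top_term k a g := (size (g - a *: 'X^k)%R <= k)%N.

Lemma size_polyD_le g h k :
  (size g <= k)%N -> (size h <= k)%N -> (size (g + h)%R <= k)%N.
Proof.
by move=> gk hk; rewrite (leq_trans (size_polyD _ _)) // geq_max gk hk.
Qed.

Lemma size_polyM_le g h k l :
  (size g <= k)%N -> (size h <= l.+1)%N -> (size (g * h)%R <= k + l)%N.
Proof. by move=> gk hl; apply: leq_trans (size_polyMleq g h) _; lia. Qed.

Lemma top_termD k a b g h :
  top_term k a g -> top_term k b h -> top_term k (a + b) (g + h).
Proof.
rewrite /top_term scalerDl => ga hb.
have -> : g + h - (a *: 'X^k + b *: 'X^k) = (g - a *: 'X^k) + (h - b *: 'X^k).
  by ring.
exact: size_polyD_le.
Qed.

Lemma top_termM k l a b g h :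
  top_term k a g -> top_term l b h -> top_term (k + l) (a * b) (g * h).
Proof.
rewrite /top_term; set A := g - _; set B := h - _ => sA sB.
have size_scaleXn c i : (size (c *: 'X^i : {poly R}) <= i.+1)%N.
  by rewrite (leq_trans (size_scale_leq _ _)) // size_polyXn.
have -> : g * h - (a * b) *: 'X^(k + l) =
    A * B + A * (b *: 'X^l) + B * (a *: 'X^k).
  have -> : (a * b) *: 'X^(k + l) = a *: 'X^k * (b *: 'X^l) :> {poly R}.
    by rewrite -scalerAl -scalerAr scalerA exprD.
  by rewrite /A /B; ring.
apply: size_polyD_le; last by rewrite addnC size_polyM_le.
by rewrite size_polyD_le ?size_polyM_le ?(leqW sB).
Qed.

Lemma top_term0 k : top_term k 0 (0 : {poly R}).
Proof. by rewrite /top_term scale0r subr0 size_poly0. Qed.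

Lemma top_termC c : top_term 0 c c%:P.
Proof. by rewrite /top_term expr0 alg_polyC subrr size_poly0. Qed.

Lemma top_term_linear c r : top_term 1 r (c%:P + r *: 'X).
Proof. by rewrite /top_term expr1 addrK size_polyC_leq1. Qed.

End TopTerm.

Lemma mpoly_ring_ind (R : comNzRingType) N (Q : {mpoly R[N]} -> Prop) :
  (forall c, Q c%:MP) -> (forall i, Q 'X_i) ->
  (forall p q, Q p -> Q q -> Q (p + q)) ->
  (forall p q, Q p -> Q q -> Q (p * q)) -> forall p, Q p.
Proof.
move=> QC QX QD QM p; rewrite [p]mpolyE.
have Q0 : Q 0 by rewrite -mpolyC0.
apply: big_ind => // m _; rewrite -mul_mpolyC mpolyXE_id; apply: (QM) => //.
have Q1 : Q 1 by rewrite -mpolyC1.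
apply: (big_ind Q) => // i _; elim: (m i) => [|k IHk]; first by rewrite expr0.
by rewrite exprS; apply: QM.
Qed.

Section LineRestriction.
Variables (K : fieldType) (N : nat) (P R : vec K N).
Implicit Types p q : {mpoly K[N]}.

Definition line_poly p : {poly K} :=
  mmap (@polyC K) (fun i => (P i)%:P + R i *: 'X) p.

Definition dir_deriv p : K := \sum_i R i * (mderiv i p).@[P].

Lemma line_polyX i : line_poly 'X_i = (P i)%:P + R i *: 'X.
Proof. by rewrite /line_poly mmapX mmap1U. Qed.

Lemma horner_line_poly t p : (line_poly p).[t] = p.@[P + t *: R].
Proof.
elim/mpoly_ring_ind: p => [c | i | p q IHp IHq | p q IHp IHq].
- by rewrite /line_poly mmapC hornerC mevalC.
- by rewrite line_polyX mevalXU !ffunE hornerD hornerC hornerZ hornerX mulrC.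
- by rewrite /line_poly mmapD hornerD IHp IHq mevalD.
- by rewrite /line_poly rmorphM hornerM IHp IHq mevalM.
Qed.

Lemma coef0_line_poly p : (line_poly p)`_0 = p.@[P].
Proof. by rewrite -horner_coef0 horner_line_poly scale0r addr0. Qed.

Lemma coef1_line_poly p : (line_poly p)`_1 = dir_deriv p.
Proof.
rewrite /dir_deriv.
elim/mpoly_ring_ind: p => [c | i | p q IHp IHq | p q IHp IHq].
- rewrite /line_poly mmapC coefC big1 // => i _.
  by rewrite mderivC meval0 mulr0.
- rewrite line_polyX coefD coefC coefZ coefX mulr1 add0r (bigD1 i) //= big1.
    rewrite mderivX mnm1E eqxx mevalZ mevalX big1 ?mulr1 ?addr0 // => j _.
    by rewrite mnmBE subnn expr0.
  move=> j /negbTE ji.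
  by rewrite mderivX mnm1E eq_sym ji mulr0n scale0r meval0 mulr0.
- rewrite /line_poly mmapD coefD IHp IHq -big_split; apply: eq_bigr => i _.
  by rewrite mderivD mevalD mulrDr.
- rewrite /line_poly rmorphM coefM !big_ord_recl big_ord0 /= -/(line_poly p).
  rewrite -/(line_poly q) !coef0_line_poly IHp IHq addr0.
  rewrite mulr_sumr mulr_suml -big_split; apply: eq_bigr => i _ /=.
  rewrite mderivM mevalD !mevalM; ring.
Qed.

Lemma line_poly_homog d p :
  homog_of_deg d p -> top_term d p.@[R] (line_poly p).
Proof.
pose top k q := top_term k q.@[R] (line_poly q).
have topD k q1 q2 : top k q1 -> top k q2 -> top k (q1 + q2).
  by rewrite /top /line_poly mmapD mevalD; apply: top_termD.
have topM k l q1 q2 : top k q1 -> top l q2 -> top (k + l)%N (q1 * q2).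
  by rewrite /top /line_poly mevalM rmorphM; apply: top_termM.
have topC c : top 0%N c%:MP by rewrite /top /line_poly mmapC mevalC top_termC.
have topXn i e : top e ('X_i ^+ e).
  elim: e => [|e IHe]; first by rewrite expr0 -mpolyC1 topC.
  rewrite exprS -add1n; apply: topM => //.
  by rewrite /top line_polyX mevalXU top_term_linear.
move=> /dhomogP homog_p; rewrite [p]mpolyE big_seq.
apply: (big_ind (top d)) => [||m /homog_p deg_m]; last 1 first.
- have <- : mdeg m = d := deg_m.
  rewrite -mul_mpolyC -[mdeg m]add0n; apply: (topM) => //.
  rewrite mpolyXE_id mdegE.
  apply: (big_ind2 (fun q k => top k q)) => [|q1 q2 k l|i _]; [|exact: topM|].
    by rewrite -mpolyC1 topC.
  exact: topXn.
- by rewrite /top /line_poly mmap0 meval0 top_term0.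
- exact: topD.
Qed.

End LineRestriction.

Definition unit_vec {K : fieldType} {N} (i : 'I_N) : vec K N :=
  [ffun j => (j == i)%:R].

Lemma dir_derivDr (K : fieldType) N (P R1 R2 : vec K N) p :
  dir_deriv P (R1 + R2) p = dir_deriv P R1 p + dir_deriv P R2 p.
Proof.
by rewrite /dir_deriv -big_split; apply: eq_bigr => i _; rewrite ffunE mulrDl.
Qed.

Lemma dir_deriv_unit_vec (K : fieldType) N (P : vec K N) i p :
  dir_deriv P (unit_vec i) p = (mderiv i p).@[P].
Proof.
rewrite /dir_deriv (bigD1 i) //= big1 => [|j /negbTE ji]; rewrite ffunE.
  by rewrite eqxx mul1r addr0.
by rewrite ji mul0r.
Qed.

Lemma meval_homogZ (K : fieldType) N d (F : {mpoly K[N]}) c (u : vec K N) :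
  homog_of_deg d F -> F.@[c *: u] = c ^+ d * F.@[u].
Proof.
move=> /dhomogP homog_F; rewrite !mevalE mulr_sumr big_seq [RHS]big_seq.
apply: eq_bigr => m /homog_F deg_m; have <- : mdeg m = d := deg_m.
rewrite mulrCA mdegE -prodrXr -big_split; congr (_ * _).
by apply: eq_bigr => i _; rewrite ffunE exprMn.
Qed.

Lemma card_lt_deg_of_line_in_zeros (K : finFieldType) N d (F : {mpoly K[N]})
    (P R : vec K N) :
  homog_of_deg d F -> F.@[R] = 0 -> (forall t, F.@[P + t *: R] = 0) ->
  dir_deriv P R F != 0 -> (#|K| < d)%N.
Proof.
move=> homog_F FR0 F_line DF.
have g_neq0 : line_poly P R F != 0.
  by apply: contraNneq DF => g0; rewrite -coef1_line_poly g0 coef0.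
have size_g : (size (line_poly P R F) <= d)%N.
  by have := line_poly_homog P R homog_F; rewrite /top_term FR0 scale0r subr0.
have roots_g : all (root (line_poly P R F)) (enum K).
  by apply/allP => t _; rewrite /root horner_line_poly F_line.
rewrite cardE; apply: leq_trans size_g.
exact: max_poly_roots g_neq0 roots_g (enum_uniq _).
Qed.

Lemma exists_nonroot_on_line (K : finFieldType) N d (F : {mpoly K[N]})
    (P R : vec K N) :
  homog_of_deg d F -> (d <= #|K|)%N -> F.@[P] = 0 -> dir_deriv P R F != 0 ->
  exists a b, b != 0 /\ F.@[a *: P + b *: R] != 0.
Proof.
move=> homog_F d_le_q FP0 DF.
pose nonroot (ab : K * K) := (ab.2 != 0) && (F.@[ab.1 *: P + ab.2 *: R] != 0).
case: (pickP nonroot).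
  by move=> [a b] /andP[b_neq0 Fab]; exists a, b.
move=> no_nonroot.
have F_line a b : b != 0 -> F.@[a *: P + b *: R] = 0.
  move=> b_neq0; have := no_nonroot (a, b).
  by rewrite /nonroot /= b_neq0 => /negbFE/eqP.
have FR0 : F.@[R] = 0.
  by have := F_line 0 1 (oner_neq0 _); rewrite scale0r add0r scale1r.
have : (#|K| < d)%N.
  apply: (card_lt_deg_of_line_in_zeros homog_F FR0 _ DF) => t.
  have [-> | t_neq0] := eqVneq t 0; first by rewrite scale0r addr0.
  by have := F_line 1 t t_neq0; rewrite scale1r.
by rewrite ltnNge d_le_q.
Qed.

Lemma normalize_vec (K : finFieldType) N (w : vec K N) :
  w != 0 ->
  exists c (u : vec K N), [/\ c != 0, u \in proj_points K N & w = c *: u].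
Proof.
move=> w_neq0; have [i0 wi0_neq0] : exists i, w i != 0.
  apply/existsP; apply: contraR w_neq0 => /existsPn w0.
  by apply/eqP/ffunP => i; rewrite ffunE; apply/eqP/negPn/w0.
case: (@arg_minnP _ i0 (fun i => w i != 0) val wi0_neq0) => k wk_neq0 k_min.
exists (w k), [ffun j => w j / w k]; split => //.
  rewrite inE; apply/existsP; exists k; rewrite ffunE divff // eqxx /=.
  apply/forallP => j; apply/implyP => jk; rewrite ffunE.
  have [-> | wj_neq0] := eqVneq (w j) 0; first by rewrite mul0r.
  by have := k_min j wj_neq0; rewrite leqNgt jk.
by apply/ffunP => i; rewrite !ffunE -[_ *: _]/(_ * _) mulrC divfK.
Qed.

Lemma nonroot_points_eq (K : finFieldType) N (F : {mpoly K[N]}) :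
  (#|proj_points K N| - 1 <= #|hyp_points F|)%N ->
  {in proj_points K N &, forall u1 u2 : vec K N,
    F.@[u1] != 0 -> F.@[u2] != 0 -> u1 = u2}.
Proof.
move=> card_hyp u1 u2 u1P u2P Fu1 Fu2.
have hyp_sub : hyp_points F \subset proj_points K N.
  by apply/subsetP => u; rewrite inE => /andP[].
have /card_le1_eqP : (#|proj_points K N :\: hyp_points F| <= 1)%N.
  by rewrite cardsDS //; lia.
by apply; rewrite in_setD /hyp_points inE negb_and ?u1P ?u2P ?Fu1 ?Fu2.
Qed.

Lemma nonroots_proportional (K : finFieldType) N d (F : {mpoly K[N]})
    (w1 w2 : vec K N) :
  (0 < d)%N -> homog_of_deg d F ->
  (#|proj_points K N| - 1 <= #|hyp_points F|)%N ->
  F.@[w1] != 0 -> F.@[w2] != 0 -> exists c, w1 = c *: w2.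
Proof.
move=> d_gt0 homog_F card_hyp.
have normalize_nonroot (w : vec K N) : F.@[w] != 0 -> exists c (u : vec K N),
    [/\ c != 0, u \in proj_points K N, F.@[u] != 0 & w = c *: u].
  move=> Fw; have w_neq0 : w != 0.
    apply: contraNneq Fw => ->.
    rewrite -(scale0r (0 : vec K N)) (meval_homogZ _ _ homog_F).
    by rewrite expr0n gtn_eqF // mul0r.
  have [c [u [c_neq0 uP w_cu]]] := normalize_vec w_neq0.
  exists c, u; split => //; apply: contraNneq Fw => Fu0.
  by rewrite w_cu (meval_homogZ _ _ homog_F) Fu0 mulr0.
move=> /normalize_nonroot [c1 [u1 [_ u1P Fu1 ->]]].
move=> /normalize_nonroot [c2 [u2 [c2_neq0 u2P Fu2 ->]]].
rewrite (nonroot_points_eq card_hyp u1P u2P Fu1 Fu2).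
by exists (c1 / c2); rewrite scalerA divfK.
Qed.

Definition in_span2 {K : fieldType} {V : lmodType K} (u x w : V) : Prop :=
  exists a b, w = a *: u + b *: x.

Lemma in_span2_of_line_meet (K : fieldType) (V : lmodType K) (u x w : V)
    a1 b1 a2 b2 c :
  b2 != 0 -> a2 *: u + b2 *: w = c *: (a1 *: u + b1 *: x) -> in_span2 u x w.
Proof.
move=> b2_neq0 meet; exists ((c * a1 - a2) / b2), (c * b1 / b2).
apply: (scalerI b2_neq0).
have -> : b2 *: w = c *: (a1 *: u + b1 *: x) - a2 *: u.
  by rewrite -meet addrC addKr.
rewrite [RHS]scalerDr !scalerA ![b2 * _]mulrC !divfK // scalerBl.
by rewrite scalerDr !scalerA addrAC.
Qed.

Lemma exists_unit_vec_off_span2 (K : fieldType) N (v : vec K N) (i0 : 'I_N) :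
  (2 < N)%N -> exists j, ~ in_span2 v (unit_vec i0) (unit_vec j).
Proof.
move=> N_gt2; have : (1 < #|[set~ i0]|)%N by rewrite cardsC1 card_ord; lia.
case/card_gt1P => j1 [j2 []]; rewrite !in_setC1 => j1_i0 j2_i0 j12.
have coord j a b : (a *: v + b *: unit_vec i0) j = a * v j + b * (j == i0)%:R.
  by rewrite !ffunE.
have [vj2_0 | vj2_neq0] := eqVneq (v j2) 0.
  exists j2 => -[a [b /(congr1 (fun u : vec K N => u j2))]].
  rewrite coord ffunE eqxx vj2_0 (negbTE j2_i0) !mulr0 addr0.
  by apply/eqP/oner_neq0.
exists j1 => -[a [b e]].
have := congr1 (fun u : vec K N => u j2) e.
rewrite /= coord ffunE eq_sym (negbTE j12) (negbTE j2_i0) mulr0 addr0.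
move=> /esym/eqP; rewrite mulf_eq0 (negbTE vj2_neq0) orbF => /eqP a0.
have := congr1 (fun u : vec K N => u j1) e.
rewrite /= coord ffunE eqxx a0 (negbTE j1_i0) mul0r mulr0 addr0.
by apply/eqP/oner_neq0.
Qed.

Lemma exists_direction_off_span2 (K : fieldType) N (L : vec K N -> K)
    (v : vec K N) i0 :
  {morph L : x y / x + y} -> (2 < N)%N -> L (unit_vec i0) != 0 ->
  exists R, L R != 0 /\ ~ in_span2 v (unit_vec i0) R.
Proof.
move=> L_add N_gt2 L_i0.
have [j off_j] := exists_unit_vec_off_span2 v i0 N_gt2.
have [Lj0 | Lj_neq0] := eqVneq (L (unit_vec j)) 0; last by exists (unit_vec j).
exists (unit_vec j + unit_vec i0); split; first by rewrite L_add Lj0 add0r.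
move=> [a [b e]]; apply: off_j; exists a, (b - 1).
by rewrite scalerBl scale1r addrA -e addrK.
Qed.

Unset Implicit Arguments.

Theorem lemma2p7 (K : finFieldType) (n d : nat) (F : {mpoly K[n.+1]}) :
  (2 <= n)%N ->
  F != 0%R -> (0 < d)%N -> homog_of_deg d F ->
  (exists v, smooth_point F v) ->
  (#|proj_points K n.+1| - 1 <= #|hyp_points F|)%N ->
  (#|K|.+1 <= d)%N.
Proof.
move=> n_ge2 _ d_gt0 homog_F [v /andP[vX /existsP[i0 dF_v]]] card_hyp.
rewrite ltnNge; apply/negP => d_le_q.
have Fv0 : F.@[v] = 0 by move: vX; rewrite inE => /andP[_ /eqP].
have D_i0 : dir_deriv v (unit_vec i0) F != 0 by rewrite dir_deriv_unit_vec.
have [R [D_R R_off]] := exists_direction_off_span2 v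
  (fun R1 R2 => dir_derivDr v R1 R2 F) n_ge2 D_i0.
have [a1 [b1 [_ F1]]] := exists_nonroot_on_line homog_F d_le_q Fv0 D_i0.
have [a2 [b2 [b2_neq0 F2]]] := exists_nonroot_on_line homog_F d_le_q Fv0 D_R.
have [c meet] := nonroots_proportional d_gt0 homog_F card_hyp F2 F1.
exact/R_off/(in_span2_of_line_meet b2_neq0 meet).
Qed.
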